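(* Let $\mathcal{A}=\{n\in\mathbb{N}_{\ge1} : V(n+1)/V(n)>1\}$ and $\mathcal{B}=\{n\in\mathbb{N}_{\ge1} : V(n+1)/V(n)<1\}$ (both sets are infinite). Then $$\liminf_{n\to\infty,\ n\in\mathcal{A}}\frac{V(n+1)}{V(n)}=1 \quad\text{and}\quad \limsup_{n\to\infty,\ n\in\mathcal{B}}\frac{V(n+1)}{V(n)}=1.$$
   Context: For a positive integer $n$, an integer $a$ is called regular modulo $n$ if there exists an integer $x$ with $a^2x\equiv a \pmod n$. Let $V(n)$ denote the number of integers $a$ with $1\le a\le n$ that are regular modulo $n$. (Known fact: $V$ is multiplicative, $V(1)=1$, and $V(p^{\alpha})=p^{\alpha}-p^{\alpha-1}+1$ for a prime $p$ and $\alpha\ge1$.) *)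

From Stdlib Require Import Reals ZArith Arith List ClassicalEpsilon.
Open Scope R_scope.

Definition regular (n : nat) (a : Z) : Prop :=
  exists x : Z, (Z.of_nat n | a * a * x - a)%Z.

Definition V (n : nat) : nat :=
  length (filter (fun a : nat =>
            if excluded_middle_informative (regular n (Z.of_nat a)) then true else false)
          (seq 1 n)).

Definition ratio (n : nat) : R := INR (V (n + 1)) / INR (V n).

Definition is_lower_bound (E : R -> Prop) (m : R) : Prop := forall x, E x -> m <= x.
Definition is_glb (E : R -> Prop) (m : R) : Prop :=
  is_lower_bound E m /\ (forall b, is_lower_bound E b -> b <= m).

Definition tail_vals (P : nat -> Prop) (f : nat -> R) (N : nat) : R -> Prop :=
  fun z => exists n, (N <= n)%nat /\ P n /\ z = f n.

Definition is_liminf_on (P : nat -> Prop) (f : nat -> R) (l : R) : Prop :=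
  is_lub (fun y => exists N, is_glb (tail_vals P f N) y) l.

Definition is_limsup_on (P : nat -> Prop) (f : nat -> R) (l : R) : Prop :=
  is_glb (fun y => exists N, is_lub (tail_vals P f N) y) l.

Definition setA (n : nat) : Prop := (1 <= n)%nat /\ ratio n > 1.
Definition setB (n : nat) : Prop := (1 <= n)%nat /\ ratio n < 1.

Definition infinite_nat_set (P : nat -> Prop) : Prop :=
  forall N, exists n, (N <= n)%nat /\ P n.

(* The proof avoids the multiplicativity of V and works from two estimates:
   - a is regular modulo n as soon as no nonunit e with e^2 | n divides a, and is
     not regular when p | a, p^2 | n, p^2 not dividing a; hence V(n) = n for
     squarefree n, and V(M) lies between M - (number of multiples of p) and M - 2
     when M = p^2 m with p prime and m squarefree;
   - a sieve count: two suitable linear forms in j take simultaneously values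
     free of odd square factors for arbitrarily large j, because the sum of
     1/(2k+3)^2 is below 1/4.
   For A take n = 4j + 1 with n and n + 1 squarefree: the ratio is 1 + 1/n.
   For B take n = p^2 (4j + 2) - 1 with n and 4j + 2 squarefree and p a large
   prime: the ratio V(n+1)/n lies in (1 - 1/p, 1).  The theorem follows since
   the infimum (resp. supremum) of every tail is then exactly 1. *)
From Stdlib Require Import Reals ZArith Lia Lra List Znumtheory Bool ClassicalEpsilon.
From mathcomp Require ssrbool eqtype ssrnat div prime.

Local Open Scope nat_scope.

Definition squarefree (z : Z) : Prop := forall e : Z, (e * e | z)%Z -> Z.abs e = 1%Z.

Local Open Scope Z_scope.

(* If no nonunit e with e^2 | n divides a, then a is regular: writing g = gcd(a, n)
   and n = g h, one has gcd(a, h) = 1, and a Bezout inverse u of a modulo h gives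
   a^2 u = a modulo g h. *)
Lemma regular_of_no_square_factor (n : nat) (a : Z) : (0 < n)%nat ->
  (forall e, (e | a) -> (e * e | Z.of_nat n) -> Z.abs e = 1) -> regular n a.
Proof.
  intros Hn Hsq. unfold regular. set (N := Z.of_nat n) in *.
  destruct (Z.gcd_divide_r a N) as [h Hh].
  destruct (Z.gcd_divide_l a N) as [a' Ha].
  set (g := Z.gcd a N) in Hh, Ha.
  assert (Hgh : Z.gcd g h = 1).
  { set (d := Z.gcd g h).
    assert (Hdd : (d * d | N)).
    { rewrite Hh. apply Z.divide_trans with (h * d).
      - apply Z.mul_divide_mono_r, Z.gcd_divide_r.
      - apply Z.mul_divide_mono_l, Z.gcd_divide_l. }
    assert (Hda : (d | a))
      by (apply Z.divide_trans with g; [apply Z.gcd_divide_l | exists a'; exact Ha]).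
    pose proof (Hsq d Hda Hdd). pose proof (Z.gcd_nonneg g h). lia. }
  assert (Hah : Z.gcd a h = 1).
  { apply Z.divide_1_r_nonneg; [apply Z.gcd_nonneg|]. rewrite <- Hgh.
    apply Z.gcd_greatest; [|apply Z.gcd_divide_r].
    apply Z.gcd_greatest; [apply Z.gcd_divide_l|].
    apply Z.divide_trans with h; [apply Z.gcd_divide_r | exists g; lia]. }
  destruct (Z.gcd_bezout a h 1 Hah) as [u [v Huv]].
  exists u, (- (a' * v)).
  replace (a * a * u - a) with (a * (u * a - 1)) by ring.
  replace (u * a - 1) with (- (v * h)) by lia.
  rewrite Hh, Ha. ring.
Qed.

(* If p^2 | n and p | a but p^2 does not divide a, then a is not regular:
   a^2 x - a = a (a x - 1) with a x - 1 coprime to p. *)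
Lemma not_regular_of_square_factor (n : nat) (a p : Z) :
  (p * p | Z.of_nat n) -> (p | a) -> ~ (p * p | a) -> ~ regular n a.
Proof.
  intros Hpn [k Hk] Hnot [x Hx]. apply Hnot.
  assert (Hcop : rel_prime (a * x - 1) p).
  { apply bezout_rel_prime. apply Bezout_intro with (-1) (k * x). subst a. ring. }
  apply Gauss with (a * x - 1).
  - apply Z.divide_trans with (Z.of_nat n); [exact Hpn|].
    replace ((a * x - 1) * a) with (a * a * x - a) by ring. exact Hx.
  - apply rel_prime_sym, rel_prime_mult; exact Hcop.
Qed.

Lemma regular_of_squarefree (n : nat) (a : Z) :
  (0 < n)%nat -> squarefree (Z.of_nat n) -> regular n a.
Proof. intros Hn Hsq. apply regular_of_no_square_factor; auto. Qed.

Local Close Scope Z_scope.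

Lemma exists_prime_above (P : nat) : exists p : nat, P < p /\ prime (Z.of_nat p).
Proof.
  destruct (prime.prime_above P) as [p HPp Hp].
  exists p. split; [exact (ssrbool.elimT ssrnat.ltP HPp)|].
  destruct (ssrbool.elimT prime.primeP Hp) as [Hp1 Hdiv].
  apply prime_alt. split.
  - apply (ssrbool.elimT ssrnat.ltP) in Hp1. lia.
  - intros z Hz [k Hk].
    assert (Hk0 : (0 < k)%Z) by nia.
    assert (Hd : is_true (div.dvdn (Z.to_nat z) p)).
    { apply (ssrbool.introT div.dvdnP). exists (Z.to_nat k).
      rewrite ssrnat.mulnE. apply Nat2Z.inj. rewrite Nat2Z.inj_mul, !Z2Nat.id; lia. }
    destruct (ssrbool.elimT ssrbool.orP (Hdiv _ Hd)) as [E|E];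
      apply (ssrbool.elimT eqtype.eqP) in E; lia.
Qed.

Section Counting.
Context {A : Type}.

Lemma filter_length_mono (f g : A -> bool) (l : list A) :
  (forall x, In x l -> g x = true -> f x = true) ->
  length (filter g l) <= length (filter f l).
Proof.
  induction l as [|x l IH]; simpl; intros H; [lia|].
  specialize (IH (fun y Hy => H y (or_intror Hy))).
  destruct (g x) eqn:Gx.
  - rewrite (H x (or_introl eq_refl) Gx). simpl. lia.
  - destruct (f x); simpl; lia.
Qed.

Lemma filter_length_orb (f g : A -> bool) (l : list A) :
  length (filter (fun x => f x || g x) l) <= length (filter f l) + length (filter g l).
Proof. induction l as [|x l IH]; simpl; [lia|]. destruct (f x), (g x); simpl; lia. Qed.

Lemma filter_length_lt (f : A -> bool) (l : list A) :
  length (filter f l) < length l -> exists x, In x l /\ f x = false.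
Proof.
  intros Hlt. rewrite <- (filter_length f l) in Hlt.
  destruct (filter (fun x => negb (f x)) l) as [|x rest] eqn:E; simpl in Hlt; [lia|].
  exists x. assert (Hx : In x (filter (fun x => negb (f x)) l)) by (rewrite E; left; reflexivity).
  apply filter_In in Hx. destruct Hx as [Hx Fx]. split; [exact Hx|]. destruct (f x); easy.
Qed.

Lemma length_le_of_injection (h : A -> nat) (l : list A) (K : nat) : NoDup l ->
  (forall x y, In x l -> In y l -> h x = h y -> x = y) ->
  (forall x, In x l -> h x < K) -> length l <= K.
Proof.
  intros Hnd Hinj Hlt. rewrite <- (length_map h l), <- (length_seq K 0).
  apply NoDup_incl_length.
  - apply NoDup_map_NoDup_ForallPairs; [exact Hinj | exact Hnd].
  - intros y Hy. apply in_map_iff in Hy. destruct Hy as [x [<- Hx]].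
    apply in_seq. specialize (Hlt x Hx). lia.
Qed.

End Counting.

Lemma count_multiples (p M : nat) : 0 < p ->
  length (filter (fun a => a mod p =? 0) (seq 1 M)) <= M / p.
Proof.
  intros Hp. apply length_le_of_injection with (h := fun a => a / p - 1).
  - apply NoDup_filter, seq_NoDup.
  - intros x y Hx Hy Exy.
    apply filter_In in Hx as [Hx Mx], Hy as [Hy My].
    apply Nat.eqb_eq in Mx, My. apply in_seq in Hx, Hy.
    pose proof (Nat.div_mod_eq x p) as Ex. pose proof (Nat.div_mod_eq y p) as Ey.
    rewrite Mx in Ex. rewrite My in Ey.
    assert (1 <= x / p) by (destruct (x / p); lia).
    assert (1 <= y / p) by (destruct (y / p); lia).
    simpl in Exy. assert (Hq : x / p = y / p) by lia. rewrite Ex, Ey, Hq. reflexivity.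
  - intros x Hx. apply filter_In in Hx as [Hx Mx]. apply Nat.eqb_eq in Mx. apply in_seq in Hx.
    pose proof (Nat.div_mod_eq x p).
    assert (x / p <= M / p) by (apply Nat.Div0.div_le_mono; lia).
    assert (1 <= x / p) by (destruct (x / p); lia).
    lia.
Qed.

Definition divb (q x : Z) : bool := (x mod q =? 0)%Z.

Lemma divbP (q x : Z) : (0 < q)%Z -> divb q x = true <-> (q | x)%Z.
Proof. intros Hq. unfold divb. rewrite Z.eqb_eq. apply Z.mod_divide. lia. Qed.

(* The values of the linear form [c j + b] divisible by [q], for j < J, are at most
   one per block of [q] consecutive j, as long as [q] is coprime to the slope [c]
   whenever it divides a value. *)
Lemma count_form_divisible (c b : Z) (q J : nat) : 0 < q ->
  (forall j, (Z.of_nat q | c * Z.of_nat j + b)%Z -> Z.gcd (Z.of_nat q) c = 1%Z) ->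
  length (filter (fun j => divb (Z.of_nat q) (c * Z.of_nat j + b)) (seq 0 J)) <= J / q + 1.
Proof.
  intros Hq Hgcd. apply length_le_of_injection with (h := fun j => j / q).
  - apply NoDup_filter, seq_NoDup.
  - intros x y Hx Hy Exy.
    apply filter_In in Hx as [_ Hx], Hy as [_ Hy].
    apply divbP in Hx, Hy; try lia.
    assert (Hcop : rel_prime (Z.of_nat q) c) by (apply Zgcd_1_rel_prime, (Hgcd x Hx)).
    assert (Hdiff : (Z.of_nat q | c * (Z.of_nat y - Z.of_nat x))%Z).
    { replace (c * (Z.of_nat y - Z.of_nat x))%Z
        with ((c * Z.of_nat y + b) - (c * Z.of_nat x + b))%Z by ring.
      apply Z.divide_sub_r; assumption. }
    apply Gauss in Hdiff as [k Hk]; [|exact Hcop].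
    pose proof (Nat.div_mod_eq x q). pose proof (Nat.div_mod_eq y q).
    pose proof (Nat.mod_upper_bound x q ltac:(lia)).
    pose proof (Nat.mod_upper_bound y q ltac:(lia)).
    simpl in Exy. rewrite Exy in *.
    assert (k = 0%Z) by nia. subst k. lia.
  - intros x Hx. apply filter_In in Hx as [Hx _]. apply in_seq in Hx.
    assert (x / q <= J / q) by (apply Nat.Div0.div_le_mono; lia). lia.
Qed.

Definition regb (n a : nat) : bool :=
  if excluded_middle_informative (regular n (Z.of_nat a)) then true else false.

Lemma V_as_filter (n : nat) : V n = length (filter (regb n) (seq 1 n)).
Proof. reflexivity. Qed.

Lemma V_lower (n : nat) (g : nat -> bool) :
  (forall a, 1 <= a <= n -> g a = true -> regular n (Z.of_nat a)) ->
  length (filter g (seq 1 n)) <= V n.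
Proof.
  intros Hg. rewrite V_as_filter. apply filter_length_mono.
  intros a Ha Ga. apply in_seq in Ha. unfold regb.
  destruct excluded_middle_informative as [_|Hnreg]; [reflexivity|].
  exfalso. apply Hnreg, Hg; [lia | exact Ga].
Qed.

Lemma V_upper (n : nat) (bad : list nat) : NoDup bad ->
  (forall a, In a bad -> 1 <= a <= n /\ ~ regular n (Z.of_nat a)) ->
  V n + length bad <= n.
Proof.
  intros Hnd Hbad. rewrite V_as_filter.
  assert (length bad <= length (filter (fun a => negb (regb n a)) (seq 1 n))).
  { apply NoDup_incl_length; [exact Hnd|]. intros a Ha. destruct (Hbad a Ha) as [Hrange Hnreg].
    apply filter_In. split; [apply in_seq; lia|]. unfold regb.
    destruct excluded_middle_informative; [contradiction | reflexivity]. }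
  pose proof (filter_length (regb n) (seq 1 n)). rewrite length_seq in *. lia.
Qed.

Lemma V_squarefree (n : nat) : 0 < n -> squarefree (Z.of_nat n) -> V n = n.
Proof.
  intros Hn Hsq. apply Nat.le_antisymm.
  - rewrite V_as_filter. eapply Nat.le_trans; [apply filter_length_le|].
    rewrite length_seq. reflexivity.
  - eapply Nat.le_trans; [|apply V_lower with (g := fun _ => true)].
    + rewrite filter_true, length_seq. reflexivity.
    + intros a _ _. apply regular_of_squarefree; assumption.
Qed.

(* The odd squares (2k+3)^2 = 9, 25, 49, ...; together with 4 they detect
   every square factor. *)
Definition odd_square (k : nat) : nat := (2 * k + 3) * (2 * k + 3).

Definition odd_square_free (z : Z) : Prop :=
  forall k, ~ (Z.of_nat (odd_square k) | z)%Z.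

(* A positive integer divisible neither by 4 nor by an odd square is squarefree:
   a square e^2 | f with |e| > 1 has |e| even (so 4 | f) or |e| = 2k+3. *)
Lemma squarefree_of_odd_square_free (f : Z) :
  (0 < f)%Z -> ~ (4 | f)%Z -> odd_square_free f -> squarefree f.
Proof.
  intros Hf H4 Hodd e He.
  rewrite <- Z.abs_square in He. set (u := Z.abs e) in *.
  assert (Hu : (0 <= u)%Z) by apply Z.abs_nonneg.
  destruct (Z.Even_or_Odd u) as [[w Hw]|[w Hw]].
  - exfalso. destruct (Z.eq_dec w 0) as [W|W].
    + rewrite Hw, W in He. destruct He as [t Ht]. lia.
    + apply H4. apply Z.divide_trans with (u * u)%Z; [|exact He].
      exists (w * w)%Z. rewrite Hw. ring.
  - destruct (Z.eq_dec w 0) as [W|W]; [lia|].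
    exfalso. apply (Hodd (Z.to_nat (w - 1))).
    replace (Z.of_nat (odd_square (Z.to_nat (w - 1)))) with (u * u)%Z; [exact He|].
    unfold odd_square. rewrite Nat2Z.inj_mul, Nat2Z.inj_add, Nat2Z.inj_mul, Z2Nat.id by lia.
    rewrite Hw. ring.
Qed.

Lemma odd_square_coprime_4 (k : nat) : Z.gcd (Z.of_nat (odd_square k)) 4 = 1%Z.
Proof.
  apply Zgcd_1_rel_prime.
  assert (Hodd : rel_prime (Z.of_nat (odd_square k)) 2).
  { apply bezout_rel_prime.
    apply Bezout_intro with 1%Z (- (2 * Z.of_nat k * Z.of_nat k + 6 * Z.of_nat k + 4))%Z.
    unfold odd_square. lia. }
  replace 4%Z with (2 * 2)%Z by reflexivity. apply rel_prime_mult; exact Hodd.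
Qed.

(* Partial sums of sum_k 1/(2k+3)^2 stay below 1/4 (telescoping against
   1/(4(k+1)) - 1/(4(k+2))), in the integer form needed for counting. *)
Lemma odd_square_quotients_sum (J K : nat) :
  4 * (K + 1) * list_sum (map (fun k => J / odd_square k) (seq 0 K)) <= K * J.
Proof.
  induction K as [|K IH]; [simpl; lia|].
  rewrite seq_S, map_app, list_sum_app. cbn [list_sum map fold_right].
  set (S := list_sum (map _ (seq 0 K))) in *.
  set (t := J / odd_square (0 + K)).
  assert (Ht : (2 * K + 3) * (2 * K + 3) * t <= J) by apply Nat.Div0.mul_div_le.
  assert (4 * (K + 1) * (K + 2) * (S + (t + 0)) <= (K + 1) * (K + 1) * J) by nia.
  nia.
Qed.

Lemma count_existsb {A B : Type} (P : A -> B -> bool) (ks : list B) (l : list A) :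
  length (filter (fun x => existsb (P x) ks) l)
  <= list_sum (map (fun k => length (filter (fun x => P x k) l)) ks).
Proof.
  induction ks as [|k ks IH]; simpl.
  - clear. induction l; simpl; auto.
  - pose proof (filter_length_orb (fun x => P x k) (fun x => existsb (P x) ks) l). simpl in *. lia.
Qed.

Lemma list_sum_map_bound {A : Type} (f a : A -> nat) (ks : list A) :
  (forall k, In k ks -> f k <= 2 * (a k + 1)) ->
  list_sum (map f ks) <= 2 * list_sum (map a ks) + 2 * length ks.
Proof.
  induction ks as [|k ks IH]; simpl; intros Hf; [lia|].
  specialize (Hf k (or_introl eq_refl)) as Hk.
  specialize (IH (fun x Hx => Hf x (or_intror Hx))). lia.
Qed.

Definition form (c b : Z) (j : nat) : Z := (c * Z.of_nat j + b)%Z.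

(* A form is admissible with growth constant [C] when its values are positive and
   at most C (j + 1), and every odd square dividing one of its values is coprime
   to the slope (so that it divides at most one value in each period). *)
Definition admissible (C : nat) (c b : Z) : Prop :=
  (forall j, (0 < form c b j <= Z.of_nat C * (Z.of_nat j + 1))%Z) /\
  (forall k j, (Z.of_nat (odd_square k) | form c b j)%Z ->
               Z.gcd (Z.of_nat (odd_square k)) c = 1%Z).

Definition hits (c1 b1 c2 b2 : Z) (j k : nat) : bool :=
  divb (Z.of_nat (odd_square k)) (form c1 b1 j) || divb (Z.of_nat (odd_square k)) (form c2 b2 j).

(* For j < J, the arguments hit by some (2k+3)^2 with k < K number at most
   sum_k 2 (J/(2k+3)^2 + 1) <= J/2 + 2K. *)
Lemma count_hits (C : nat) (c1 b1 c2 b2 : Z) (J K : nat) :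
  admissible C c1 b1 -> admissible C c2 b2 ->
  4 * length (filter (fun j => existsb (hits c1 b1 c2 b2 j) (seq 0 K)) (seq 0 J)) <= 2 * J + 8 * K.
Proof.
  intros [_ Hcop1] [_ Hcop2].
  set (S := list_sum (map (fun k => J / odd_square k) (seq 0 K))).
  assert (Hcount : length (filter (fun j => existsb (hits c1 b1 c2 b2 j) (seq 0 K)) (seq 0 J))
                   <= 2 * S + 2 * K).
  { eapply Nat.le_trans; [apply count_existsb|].
    eapply Nat.le_trans; [apply list_sum_map_bound with (a := fun k => J / odd_square k)|].
    2: { rewrite length_seq. reflexivity. }
    intros k _.
    assert (Hq : 0 < odd_square k) by (unfold odd_square; lia).
    pose proof (count_form_divisible c1 b1 _ J Hq (Hcop1 k)).
    pose proof (count_form_divisible c2 b2 _ J Hq (Hcop2 k)).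
    unfold hits. eapply Nat.le_trans; [apply filter_length_orb|]. unfold form in *. lia. }
  assert (HS : 4 * S <= J).
  { pose proof (odd_square_quotients_sum J K) as Hsum. fold S in Hsum. nia. }
  lia.
Qed.

Lemma divb_odd_square_large (z : Z) (k : nat) :
  (0 < z < Z.of_nat (odd_square k))%Z -> divb (Z.of_nat (odd_square k)) z = false.
Proof.
  intros Hz. destruct divb eqn:D; [exfalso|reflexivity].
  apply divbP in D; [|lia]. apply Z.divide_pos_le in D; lia.
Qed.

(* Among j < J = T^2 at most N0 are below N0 and fewer than
   J/2 + 2K are hit by some (2k+3)^2 with k < K = C T, while larger odd squares
   exceed every value C (j + 1) <= C J; for T large this leaves a good j. *)
Lemma admissible_forms_odd_square_free (C : nat) (c1 b1 c2 b2 : Z) (N0 : nat) :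
  1 <= C -> admissible C c1 b1 -> admissible C c2 b2 ->
  exists j, N0 <= j /\ odd_square_free (form c1 b1 j) /\ odd_square_free (form c2 b2 j).
Proof.
  intros HC Hadm1 Hadm2.
  set (T := 4 * C + 2 * N0 + 1). set (J := T * T). set (K := C * T).
  set (bad := fun j => (j <? N0) || existsb (hits c1 b1 c2 b2 j) (seq 0 K)).
  assert (Hfew : length (filter bad (seq 0 J)) < length (seq 0 J)).
  { assert (Hsmall : length (filter (fun j => j <? N0) (seq 0 J)) <= N0).
    { apply length_le_of_injection with (h := fun j => j).
      - apply NoDup_filter, seq_NoDup.
      - auto.
      - intros x Hx. apply filter_In in Hx as [_ Hx]. apply Nat.ltb_lt, Hx. }
    pose proof (count_hits C c1 b1 c2 b2 J K Hadm1 Hadm2).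
    pose proof (filter_length_orb (fun j => j <? N0)
                  (fun j => existsb (hits c1 b1 c2 b2 j) (seq 0 K)) (seq 0 J)).
    assert (HJ : 2 * N0 + 4 * K < J) by (unfold J, K, T; nia).
    rewrite length_seq. unfold bad. lia. }
  destruct (filter_length_lt bad (seq 0 J) Hfew) as [j [Hj Hgood]].
  apply in_seq in Hj. unfold bad in Hgood. apply orb_false_iff in Hgood as [Hlarge Hnohit].
  apply Nat.ltb_ge in Hlarge.
  assert (Hnone : forall k, hits c1 b1 c2 b2 j k = false).
  { intros k. destruct (Nat.lt_ge_cases k K) as [Hk|Hk].
    - destruct (hits c1 b1 c2 b2 j k) eqn:E; [|reflexivity]. rewrite <- Hnohit. symmetry.
      apply existsb_exists. exists k. split; [apply in_seq; lia | exact E].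
    - assert (Hbig : (Z.of_nat C * (Z.of_nat j + 1) < Z.of_nat (odd_square k))%Z).
      { assert (C * (j + 1) <= C * J) by nia.
        assert (C * J < odd_square k) by (unfold odd_square, J; nia). lia. }
      destruct Hadm1 as [Hsize1 _], Hadm2 as [Hsize2 _].
      specialize (Hsize1 j). specialize (Hsize2 j).
      unfold hits. rewrite !divb_odd_square_large by lia. reflexivity. }
  exists j. split; [exact Hlarge|].
  split; intros k Hk; specialize (Hnone k); unfold hits in Hnone;
    apply orb_false_iff in Hnone as [F1 F2];
    apply divbP in Hk; try congruence; unfold odd_square; lia.
Qed.

Lemma admissible_slope_4 (C : nat) (b : Z) : 4 <= C -> (0 < b < 4)%Z -> admissible C 4 b.
Proof.
  intros HC Hb. split.
  - intros j. unfold form. nia.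
  - intros k j _. apply odd_square_coprime_4.
Qed.

(* Values of such a form are not divisible by 4, so odd-square-free ones are
   squarefree. *)
Lemma squarefree_form_slope_4 (b : Z) (j : nat) :
  (0 < b < 4)%Z -> odd_square_free (form 4 b j) -> squarefree (form 4 b j).
Proof.
  intros Hb Hfree. apply squarefree_of_odd_square_free; [unfold form; lia | | exact Hfree].
  intros [t Ht]. unfold form in Ht. lia.
Qed.

(* The form 4 P j + (2 P - 1) is admissible: any common divisor of a value with
   the slope 4 P divides P (4 j + 2) - value = 1. *)
Lemma admissible_shifted (P : nat) : 1 <= P ->
  admissible (4 * P) (4 * Z.of_nat P) (2 * Z.of_nat P - 1).
Proof.
  intros HP. split.
  - intros j. unfold form. rewrite Nat2Z.inj_mul. nia.
  - intros k j [t Ht]. apply Zgcd_1_rel_prime, rel_prime_mult.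
    + apply Zgcd_1_rel_prime, odd_square_coprime_4.
    + apply bezout_rel_prime.
      apply Bezout_intro with (- t)%Z (4 * Z.of_nat j + 2)%Z. unfold form in Ht. lia.
Qed.

Lemma ratio_consecutive_squarefree (n : nat) : 1 <= n ->
  squarefree (Z.of_nat n) -> squarefree (Z.of_nat (n + 1)) -> ratio n = (1 + / INR n)%R.
Proof.
  intros Hn Hsq Hsq1. unfold ratio.
  rewrite (V_squarefree n), (V_squarefree (n + 1)), plus_INR by (assumption || lia).
  simpl INR. field. apply not_0_INR. lia.
Qed.

(* Elements of A with ratio arbitrarily close to 1: n = 4 j + 1 with n and
   n + 1 = 4 j + 2 both squarefree and n > 1/eps. *)
Lemma setA_near_1 (N : nat) (eps : R) : (0 < eps)%R ->
  exists n, N <= n /\ setA n /\ (ratio n < 1 + eps)%R.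
Proof.
  intros Heps. destruct (INR_unbounded (/ eps)) as [k Hk].
  destruct (admissible_forms_odd_square_free 4 4 1 4 2 (N + k + 1)) as [j [Hj [Hfree1 Hfree2]]];
    try (apply admissible_slope_4); try lia.
  set (n := 4 * j + 1).
  assert (Hratio : ratio n = (1 + / INR n)%R).
  { apply ratio_consecutive_squarefree; [unfold n; lia| |].
    - replace (Z.of_nat n) with (form 4 1 j) by (unfold form, n; lia).
      apply squarefree_form_slope_4; [lia | exact Hfree1].
    - replace (Z.of_nat (n + 1)) with (form 4 2 j) by (unfold form, n; lia).
      apply squarefree_form_slope_4; [lia | exact Hfree2]. }
  assert (Hn0 : (0 < INR n)%R) by (apply lt_0_INR; unfold n; lia).
  assert (Hkn : (INR k < INR n)%R) by (apply lt_INR; unfold n; lia).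
  assert (Hinv : (0 < / INR n < eps)%R).
  { split; [apply Rinv_0_lt_compat, Hn0|].
    rewrite <- (Rinv_inv eps). apply Rinv_lt_contravar; [|lra].
    apply Rmult_lt_0_compat; [apply Rinv_0_lt_compat, Heps | exact Hn0]. }
  exists n. repeat split; [unfold n; lia | unfold n; lia | rewrite Hratio; lra ..].
Qed.

(* If p is prime and m squarefree, every a not divisible by p is regular modulo
   p^2 m (a square factor e^2 of p^2 m dividing a must be coprime to p, hence
   divide m); so at most the p m multiples of p fail. *)
Lemma V_prime_square_lower (p m : nat) : prime (Z.of_nat p) -> 0 < m ->
  squarefree (Z.of_nat m) -> p * p * m - p * m <= V (p * p * m).
Proof.
  intros Hp Hm Hsq. set (M := p * p * m).
  assert (Hp1 : 1 < p) by (destruct Hp; lia).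
  assert (Hmult : length (filter (fun a => a mod p =? 0) (seq 1 M)) <= p * m).
  { replace (p * m) with (M / p); [apply count_multiples; lia|].
    unfold M. replace (p * p * m) with (p * m * p) by ring. apply Nat.div_mul. lia. }
  pose proof (filter_length (fun a => a mod p =? 0) (seq 1 M)) as Hsplit.
  rewrite length_seq in Hsplit.
  eapply Nat.le_trans; [|apply V_lower with (g := fun a => negb (a mod p =? 0))]; [lia|].
  intros a Ha Hnotmult. apply regular_of_no_square_factor; [unfold M; nia|].
  intros e Hea Hee.
  assert (Hcop : rel_prime e (Z.of_nat p)).
  { apply rel_prime_sym, prime_rel_prime; [exact Hp|]. intros Hpe.
    assert (Hpa : (Z.of_nat p | Z.of_nat a)%Z) by (apply Z.divide_trans with e; assumption).
    apply Z.mod_divide in Hpa; [|lia]. rewrite <- Nat2Z.inj_mod in Hpa.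
    assert (Hzero : a mod p = 0) by lia. rewrite Hzero in Hnotmult. discriminate. }
  apply Hsq, Gauss with (Z.of_nat p * Z.of_nat p)%Z.
  - replace (Z.of_nat p * Z.of_nat p * Z.of_nat m)%Z with (Z.of_nat M) by (unfold M; lia).
    exact Hee.
  - apply rel_prime_mult; apply rel_prime_sym, rel_prime_mult; apply rel_prime_sym, Hcop.
Qed.

Lemma square_not_divides_multiple (p c : Z) : (0 < c < p)%Z -> ~ (p * p | c * p)%Z.
Proof.
  intros Hc [t Ht]. assert (Hct : c = (t * p)%Z) by (apply Z.mul_reg_r with p; lia).
  destruct (Z.le_gt_cases t 0); nia.
Qed.

(* If p >= 3 and p^2 divides M > 0, then p and 2 p are not regular modulo M. *)
Lemma V_square_factor_upper (p M : nat) : 3 <= p -> 0 < M ->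
  (Z.of_nat p * Z.of_nat p | Z.of_nat M)%Z -> V M + 2 <= M.
Proof.
  intros Hp HM Hsq.
  assert (HpM : p * p <= M).
  { apply Nat2Z.inj_le. rewrite Nat2Z.inj_mul. apply Z.divide_pos_le; [lia | exact Hsq]. }
  apply (V_upper M (p :: 2 * p :: nil)).
  - repeat constructor; simpl; lia.
  - intros a Ha. destruct Ha as [<-|[<-|[]]]; (split; [nia|]);
      apply not_regular_of_square_factor with (Z.of_nat p); try assumption.
    + apply Z.divide_refl.
    + rewrite <- (Z.mul_1_l (Z.of_nat p)) at 3. apply square_not_divides_multiple. lia.
    + exists 2%Z. lia.
    + rewrite Nat2Z.inj_mul. apply square_not_divides_multiple. lia.
Qed.

Lemma lt_div_of_mul_lt (x a b : R) : (0 < b)%R -> (x * b < a)%R -> (x < a / b)%R.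
Proof.
  intros Hb H. apply Rmult_lt_reg_r with b; [exact Hb|].
  unfold Rdiv. rewrite Rmult_assoc, Rinv_l by lra. lra.
Qed.

Lemma div_lt_of_lt_mul (x a b : R) : (0 < b)%R -> (a < x * b)%R -> (a / b < x)%R.
Proof.
  intros Hb H. apply Rmult_lt_reg_r with b; [exact Hb|].
  unfold Rdiv. rewrite Rmult_assoc, Rinv_l by lra. lra.
Qed.

Lemma quotient_near_1_below (p m v : nat) (eps : R) :
  (0 < eps <= 1)%R -> (1 < eps * INR p)%R -> 4 <= p -> 2 <= m ->
  p * p * m - p * m <= v -> v + 2 <= p * p * m ->
  (1 - eps < INR v / INR (p * p * m - 1) < 1)%R.
Proof.
  intros Heps Hpeps Hp Hm Hlo Hhi.
  assert (HRp : (4 <= INR p)%R) by (replace 4%R with (INR 4) by (simpl; ring); apply le_INR, Hp).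
  assert (HRm : (2 <= INR m)%R) by (replace 2%R with (INR 2) by (simpl; ring); apply le_INR, Hm).
  assert (HRlo : (INR p * INR p * INR m - INR p * INR m <= INR v)%R).
  { rewrite <- !mult_INR, <- minus_INR by nia. apply le_INR, Hlo. }
  assert (HRhi : (INR v < INR (p * p * m - 1))%R) by (apply lt_INR; lia).
  assert (HRM : INR (p * p * m - 1) = (INR p * INR p * INR m - 1)%R).
  { rewrite minus_INR by nia. rewrite !mult_INR. reflexivity. }
  assert (HM0 : (0 < INR (p * p * m - 1))%R) by (apply lt_0_INR; nia).
  split.
  - apply lt_div_of_mul_lt; [exact HM0|].
    assert (0 < (eps * INR p - 1) * (INR p * INR m))%R by (apply Rmult_lt_0_compat; nra).
    rewrite HRM. nra.
  - apply div_lt_of_lt_mul; lra.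
Qed.

(* Elements of B with ratio arbitrarily close to 1: for a prime p > 1/eps take
   M = p^2 m with m = 4 j + 2 and n = M - 1 both squarefree. Then V(n) = n while
   M - p m <= V(M) <= M - 2, so 1 - eps < V(M)/(M - 1) < 1. *)
Lemma setB_near_1 (N : nat) (eps : R) : (0 < eps <= 1)%R ->
  exists n, N <= n /\ setB n /\ (1 - eps < ratio n)%R.
Proof.
  intros Heps. destruct (INR_unbounded (/ eps)) as [k Hk].
  destruct (exists_prime_above (k + 3)) as [p [Hpk Hp]].
  assert (Hpeps : (1 < eps * INR p)%R).
  { assert (INR k < INR p)%R by (apply lt_INR; lia).
    apply Rmult_lt_reg_l with (/ eps); [apply Rinv_0_lt_compat; lra|].
    rewrite <- Rmult_assoc, Rinv_l, Rmult_1_l, Rmult_1_r by lra. lra. }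
  set (P := p * p).
  destruct (admissible_forms_odd_square_free (4 * P) (4 * Z.of_nat P) (2 * Z.of_nat P - 1) 4 2 N)
    as [j [Hj [Hfree_n Hfree_m]]];
    [unfold P; nia | apply admissible_shifted; unfold P; nia
    | apply admissible_slope_4; unfold P; nia |].
  set (m := 4 * j + 2). set (M := P * m). set (n := M - 1).
  assert (HVn : V n = n).
  { apply V_squarefree; [unfold n, M, m, P; nia|].
    replace (Z.of_nat n) with (form (4 * Z.of_nat P) (2 * Z.of_nat P - 1) j)
      by (unfold form, n, M, m; rewrite Nat2Z.inj_sub, Nat2Z.inj_mul by (unfold P; nia); lia).
    apply squarefree_of_odd_square_free; [unfold form, P; nia | | exact Hfree_n].
    intros [t Ht]. unfold form in Ht. lia. }
  assert (Hsq_m : squarefree (Z.of_nat m)).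
  { replace (Z.of_nat m) with (form 4 2 j) by (unfold form, m; lia).
    apply squarefree_form_slope_4; [lia | exact Hfree_m]. }
  assert (HVlo : M - p * m <= V M)
    by (apply V_prime_square_lower; [exact Hp | unfold m; lia | exact Hsq_m]).
  assert (HVhi : V M + 2 <= M).
  { apply (V_square_factor_upper p); [lia | unfold M, m, P; nia |].
    exists (Z.of_nat m). unfold M, P. lia. }
  destruct (quotient_near_1_below p m (V M) eps) as [Hclose Hbelow];
    try (unfold m; lia); try assumption.
  change (p * p * m - 1) with n in Hclose, Hbelow.
  exists n. unfold setB, ratio. rewrite HVn.
  replace (n + 1) with M by (unfold n, M, m, P; nia).
  repeat split; [unfold n, M, m, P; nia | unfold n, M, m, P; nia | exact Hbelow | exact Hclose].
Qed.

Local Open Scope R_scope.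

Lemma liminf_of_tail_glbs (P : nat -> Prop) (f : nat -> R) (l : R) :
  (forall N, is_glb (tail_vals P f N) l) -> is_liminf_on P f l.
Proof.
  intros Hglb. split.
  - intros y [N [Hy _]]. apply (proj2 (Hglb N)), Hy.
  - intros b Hb. apply Hb. exists 0%nat. apply Hglb.
Qed.

Lemma limsup_of_tail_lubs (P : nat -> Prop) (f : nat -> R) (l : R) :
  (forall N, is_lub (tail_vals P f N) l) -> is_limsup_on P f l.
Proof.
  intros Hlub. split.
  - intros y [N [Hy _]]. apply (proj2 (Hlub N)), Hy.
  - intros b Hb. apply Hb. exists 0%nat. apply Hlub.
Qed.

Lemma setA_tail_glb (N : nat) : is_glb (tail_vals setA ratio N) 1.
Proof.
  split.
  - intros x [n [_ [[_ Hgt] ->]]]. lra.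
  - intros b Hb. destruct (Rle_lt_dec b 1) as [Hle|Hgt]; [exact Hle|].
    destruct (setA_near_1 N (b - 1)) as [n [HNn [HA Hclose]]]; [lra|].
    assert (b <= ratio n) by (apply Hb; exists n; auto). lra.
Qed.

Lemma setB_tail_lub (N : nat) : is_lub (tail_vals setB ratio N) 1.
Proof.
  split.
  - intros x [n [_ [[_ Hlt] ->]]]. lra.
  - intros b Hb. destruct (Rle_lt_dec 1 b) as [Hle|Hlt]; [exact Hle|].
    destruct (setB_near_1 N (Rmin (1 - b) 1)) as [n [HNn [HB Hclose]]].
    { split; [apply Rmin_glb_lt; lra | apply Rmin_r]. }
    assert (ratio n <= b) by (apply Hb; exists n; auto).
    pose proof (Rmin_l (1 - b) 1). lra.
Qed.

Theorem proposition2 :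
  infinite_nat_set setA /\ infinite_nat_set setB /\
  is_liminf_on setA ratio 1 /\ is_limsup_on setB ratio 1.
Proof.
  split; [|split; [|split]].
  - intros N. destruct (setA_near_1 N 1) as [n [HNn [HA _]]]; [lra|]. exists n. auto.
  - intros N. destruct (setB_near_1 N 1) as [n [HNn [HB _]]]; [lra|]. exists n. auto.
  - apply liminf_of_tail_glbs, setA_tail_glb.
  - apply limsup_of_tail_lubs, setB_tail_lub.
Qed.
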